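(* In the linear–quadratic example, let $(p_i)_{i\ge0}\subset[0,1]$, $Q_n=\prod_{i=0}^n(1-p_i)$, and $p^*=1-\prod_{i=0}^\infty(1-p_i)$. Define the real sequence $(\bar X^n_T)_{n\ge0}$ by $\bar X^0_T=\bar X^{\rm MFC}_T$ and $$\bar X^{n+1}_T=Q_n\,\bar X^{\rm MFC}_T+(1-Q_n)\,\tilde{\bar X}^{n+1}_T,\qquad \tilde{\bar X}^{n+1}_T=e^{-T}x_0+\tfrac12q\,\bar X^n_T\big(1-e^{-2T}\big).$$ Then: (i) if $(\bar X^n_T)_n$ converges, its limit equals $(1-p^* )\bar X^{\rm MFC}_T+p^*\,\bar X^{p^*\text{-MFG}}_T$, i.e. the terminal mean of the whole population in the $p^*$-partial mean field equilibrium; (ii) if $\big|\tfrac q2(1-e^{-2T})\big|<1$, then $(\bar X^n_T)_n$ converges as $n\to\infty$.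
   Context: Linear–quadratic example: $d=1$, $T>0$, $x_0\in\mathbb R$, $q\in\mathbb R$, $B$ a one-dimensional Brownian motion. For a square-integrable progressively measurable real control $\boldsymbol\alpha$, the state is $dX_t=\alpha_tdt+dB_t$, $X_0=x_0$. For a flow $\boldsymbol\mu$ with time-$T$ mean $\bar\mu_T$, $J(\boldsymbol\alpha;\boldsymbol\mu)=\mathbb E[\int_0^T\frac12(X_t^2+\alpha_t^2)dt+\frac12(X_T-q\bar\mu_T)^2]$. $\bar X^{\rm MFC}_T=\frac{2x_0}{e^T(1+(1-q)^2)+e^{-T}(1-(1-q)^2)}$ is the terminal mean of the (unique) MFC optimal state (MFC: minimize $J(\boldsymbol\alpha;(\mathcal L(X^{\boldsymbol\alpha}_t))_t)$). The quantity $\tilde{\bar X}^{n+1}_T$ is the terminal mean of the best response to an environment of terminal mean $\bar X^n_T$. For $p\in[0,1]$, $\bar X^{p\text{-MFG}}_T=\frac{2x_0+q(1-p)\bar X^{\rm MFC}_T(e^T-e^{-T})}{e^T(2-qp)+e^{-T}qp}$ is the terminal mean of the deviating players in the $p$-partial mean field equilibrium (a pair $(\hat{\boldsymbol\alpha}^p,p\hat{\boldsymbol\mu}^p+(1-p)\boldsymbol\mu^{\rm MFC})$ with $\hat\mu^p_t=\mathcal L(X^{\hat{\boldsymbol\alpha}^p}_t)$ and $\hat{\boldsymbol\alpha}^p$ minimizing $J(\cdot;p\hat{\boldsymbol\mu}^p+(1-p)\boldsymbol\mu^{\rm MFC})$), assuming its denominator is nonzero. *)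

From Stdlib Require Import Reals Lra.
From Coquelicot Require Import Coquelicot.
Open Scope R_scope.

Definition XMFC (T x0 q : R) : R :=
  2 * x0 / (exp T * (1 + (1 - q) ^ 2) + exp (- T) * (1 - (1 - q) ^ 2)).

Definition den_pMFG (T q p : R) : R := exp T * (2 - q * p) + exp (- T) * q * p.

(* Terminal mean of deviating players in the p-partial mean field equilibrium. *)
Definition XpMFG (T x0 q p : R) : R :=
  (2 * x0 + q * (1 - p) * XMFC T x0 q * (exp T - exp (- T))) / den_pMFG T q p.

Fixpoint Qprod (p : nat -> R) (n : nat) : R :=
  match n with
  | O => 1 - p O
  | S m => Qprod p m * (1 - p (S m))
  end.

(* p* = 1 - prod_{i>=0} (1 - p_i); the infinite product is the limit of the
   (nonincreasing, nonnegative, hence convergent) partial products. *)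
Definition pstar (p : nat -> R) : R := 1 - real (Lim_seq (Qprod p)).

(* Best response terminal mean to environment of terminal mean m. *)
Definition Xtilde (T x0 q m : R) : R :=
  exp (- T) * x0 + / 2 * q * m * (1 - exp (-2 * T)).

Fixpoint Xbar (T x0 q : R) (p : nat -> R) (n : nat) : R :=
  match n with
  | O => XMFC T x0 q
  | S m => Qprod p m * XMFC T x0 q
           + (1 - Qprod p m) * Xtilde T x0 q (Xbar T x0 q p m)
  end.

From Stdlib Require Import Reals Lra Lia.
From Coquelicot Require Import Coquelicot.
Open Scope R_scope.

(* The sequence is a relaxed iteration x_{n+1} = Q_n M + (1 - Q_n) f(x_n) of the
   affine best-response map f = Xtilde, with weights Q_n decreasing to Q = 1 - p*.
   (i) Passing to the limit in the recursion shows that any limit L is a fixed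
   point of y |-> Q M + p* f(y); as f(y) = e^{-T} x0 + a y is affine, this fixed
   point is explicit and, since 1 - p* a = e^{-T}/2 den_pMFG at p*, it
   coincides with the population mean of the p*-partial MFG.
   (ii) If |a| < 1, that fixed point L exists and e_n = |x_n - L| obeys
   e_{n+1} <= |a| e_n + |Q_n - Q| |M - f(L)|, a contraction perturbed by a
   vanishing term, hence e_n -> 0. *)

Lemma contraction_iter_le (d : nat -> R) (k eta : R) (N : nat) :
  0 <= k < 1 -> 0 <= eta -> (forall n, (N <= n)%nat -> d (S n) <= k * d n + eta) ->
  forall m, d (N + m)%nat <= k ^ m * d N + eta / (1 - k).
Proof.
  intros Hk Heta Hd; induction m as [|m IH].
  - rewrite Nat.add_0_r, pow_O.
    assert (0 <= eta / (1 - k)) by (apply Rdiv_le_0_compat; lra).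
    lra.
  - rewrite Nat.add_succ_r.
    apply Rle_trans with (k * d (N + m)%nat + eta); [apply Hd; lia|].
    apply Rle_trans with (k * (k ^ m * d N + eta / (1 - k)) + eta).
    + apply Rplus_le_compat_r, Rmult_le_compat_l; lra.
    + right; simpl; field; lra.
Qed.

Lemma is_lim_seq_0_of_contraction (d e : nat -> R) (k : R) :
  0 <= k < 1 -> (forall n, 0 <= d n) -> (forall n, d (S n) <= k * d n + e n) ->
  is_lim_seq e 0 -> is_lim_seq d 0.
Proof.
  intros Hk Hd Hrec He; apply is_lim_seq_spec; intros eps.
  assert (Heta : 0 < eps * (1 - k) / 2).
  { apply Rdiv_lt_0_compat; [apply Rmult_lt_0_compat; [apply cond_pos|]|]; lra. }
  apply is_lim_seq_spec in He.
  destruct (He (mkposreal _ Heta)) as [N HN]; simpl in HN.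
  assert (Hbound : forall m, d (N + m)%nat <= k ^ m * d N + eps / 2).
  { intro m; replace (eps / 2) with (eps * (1 - k) / 2 / (1 - k)) by (field; lra).
    apply contraction_iter_le; [lra | lra |].
    intros n Hn; specialize (HN n Hn); rewrite Rminus_0_r in HN.
    apply Rabs_lt_between in HN.
    specialize (Hrec n); lra. }
  assert (Hgeom : is_lim_seq (fun m => k ^ m * d N) 0).
  { replace (Finite 0) with (Rbar_mult 0 (d N)) by (simpl; f_equal; ring).
    apply is_lim_seq_scal_r, is_lim_seq_geom; rewrite Rabs_pos_eq; lra. }
  apply is_lim_seq_spec in Hgeom.
  assert (Heps2 : 0 < eps / 2) by (apply Rdiv_lt_0_compat; [apply cond_pos | lra]).
  destruct (Hgeom (mkposreal _ Heps2)) as [M HM]; simpl in HM.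
  exists (N + M)%nat; intros n Hn.
  specialize (HM (n - N)%nat ltac:(lia)); rewrite Rminus_0_r in HM.
  apply Rabs_lt_between in HM.
  specialize (Hbound (n - N)%nat); replace (N + (n - N))%nat with n in Hbound by lia.
  rewrite Rminus_0_r, Rabs_pos_eq by apply Hd; lra.
Qed.

Section RelaxedIteration.

Variables (Q : nat -> R) (Qlim M : R) (f : R -> R) (x : nat -> R).
Hypothesis Q_cv : is_lim_seq Q Qlim.
Hypothesis x_S : forall n, x (S n) = Q n * M + (1 - Q n) * f (x n).

Lemma relaxed_lim_fixed_point (L : R) :
  continuity_pt f L -> is_lim_seq x L -> L = Qlim * M + (1 - Qlim) * f L.
Proof.
  intros Hf Hx.
  assert (Hshift : is_lim_seq (fun n => Q n * M + (1 - Q n) * f (x n))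
                     (Qlim * M + (1 - Qlim) * f L)).
  { apply is_lim_seq_plus'.
    - apply is_lim_seq_mult'; [exact Q_cv | apply is_lim_seq_const].
    - apply is_lim_seq_mult'; [|exact (is_lim_seq_continuous f x L Hf Hx)].
      apply is_lim_seq_minus'; [apply is_lim_seq_const | exact Q_cv]. }
  apply (is_lim_seq_ext _ (fun n => x (S n))) in Hshift; [|intro; symmetry; apply x_S].
  apply is_lim_seq_incr_1 in Hx.
  apply Rbar_finite_eq.
  rewrite <- (is_lim_seq_unique _ _ Hx); exact (is_lim_seq_unique _ _ Hshift).
Qed.

Hypothesis Q_01 : forall n, 0 <= Q n <= 1.

Lemma relaxed_cv_fixed_point (k L : R) :
  0 <= k < 1 -> (forall y z, Rabs (f y - f z) <= k * Rabs (y - z)) ->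
  L = Qlim * M + (1 - Qlim) * f L -> is_lim_seq x L.
Proof.
  intros Hk Hf HL.
  set (K := Rabs (M - f L)).
  assert (Hstep : forall n,
    Rabs (x (S n) - L) <= k * Rabs (x n - L) + Rabs (Q n - Qlim) * K).
  { intro n.
    replace (x (S n) - L) with ((1 - Q n) * (f (x n) - f L) + (Q n - Qlim) * (M - f L))
      by (rewrite x_S; lra).
    eapply Rle_trans; [apply Rabs_triang|].
    rewrite !Rabs_mult, (Rabs_pos_eq (1 - Q n)) by (specialize (Q_01 n); lra).
    apply Rplus_le_compat_r.
    apply Rle_trans with (1 * (k * Rabs (x n - L))).
    - specialize (Q_01 n).
      apply Rmult_le_compat; [lra | apply Rabs_pos | lra | apply Hf].
    - lra. }
  assert (He : is_lim_seq (fun n => Rabs (Q n - Qlim) * K) 0).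
  { replace (Finite 0) with (Rbar_mult 0 K) by (simpl; f_equal; ring).
    apply is_lim_seq_scal_r, (is_lim_seq_abs_0 (fun n => Q n - Qlim)).
    replace (Finite 0) with (Finite (Qlim - Qlim)) by (f_equal; ring).
    apply is_lim_seq_minus'; [exact Q_cv | apply is_lim_seq_const]. }
  pose proof (is_lim_seq_0_of_contraction _ _ k Hk (fun n => Rabs_pos _) Hstep He) as Hd.
  apply is_lim_seq_abs_0 in Hd.
  apply (is_lim_seq_ext (fun n => (x n - L) + L)); [intro; ring|].
  replace (Finite L) with (Finite (0 + L)) by (f_equal; ring).
  apply is_lim_seq_plus'; [exact Hd | apply is_lim_seq_const].
Qed.

End RelaxedIteration.

Lemma Qprod_01 (p : nat -> R) :
  (forall i, 0 <= p i <= 1) -> forall n, 0 <= Qprod p n <= 1.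
Proof.
  intros Hp n; induction n as [|n IH]; simpl.
  - specialize (Hp O); lra.
  - specialize (Hp (S n)); split; nra.
Qed.

Lemma Qprod_nonincreasing (p : nat -> R) :
  (forall i, 0 <= p i <= 1) -> forall n, Qprod p (S n) <= Qprod p n.
Proof.
  intros Hp n; pose proof (Qprod_01 p Hp n); specialize (Hp (S n)); simpl; nra.
Qed.

Lemma is_lim_seq_Qprod (p : nat -> R) :
  (forall i, 0 <= p i <= 1) -> is_lim_seq (Qprod p) (1 - pstar p).
Proof.
  intros Hp; unfold pstar; replace (1 - (1 - real (Lim_seq (Qprod p)))) with (real (Lim_seq (Qprod p))) by ring.
  apply Lim_seq_correct', (ex_finite_lim_seq_decr _ 0 (Qprod_nonincreasing p Hp)).
  intro n; apply (Qprod_01 p Hp n).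
Qed.

Lemma pstar_01 (p : nat -> R) : (forall i, 0 <= p i <= 1) -> 0 <= pstar p <= 1.
Proof.
  intros Hp; pose proof (is_lim_seq_Qprod p Hp) as HQ.
  assert (H0 : 0 <= 1 - pstar p).
  { apply (is_lim_seq_le (fun _ => 0) (Qprod p) 0 (1 - pstar p));
      [intro n; apply (Qprod_01 p Hp n) | apply is_lim_seq_const | exact HQ]. }
  assert (H1 : 1 - pstar p <= 1).
  { apply (is_lim_seq_le (Qprod p) (fun _ => 1) (1 - pstar p) 1);
      [intro n; apply (Qprod_01 p Hp n) | exact HQ | apply is_lim_seq_const]. }
  lra.
Qed.

Lemma Xtilde_dist (T x0 q m m' : R) :
  Rabs (Xtilde T x0 q m - Xtilde T x0 q m') = Rabs (q / 2 * (1 - exp (-2 * T))) * Rabs (m - m').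
Proof.
  rewrite <- Rabs_mult; f_equal; unfold Xtilde, Rdiv; ring.
Qed.

Lemma continuity_pt_Xtilde (T x0 q m : R) : continuity_pt (Xtilde T x0 q) m.
Proof. unfold Xtilde; reg. Qed.

Lemma den_pMFG_eq (T q p : R) :
  exp (- T) / 2 * den_pMFG T q p = 1 - p * (q / 2 * (1 - exp (-2 * T))).
Proof.
  unfold den_pMFG.
  replace (exp (-2 * T)) with (exp (- T) * exp (- T)) by (rewrite <- exp_plus; f_equal; ring).
  replace (exp T) with (/ exp (- T)) by (rewrite exp_Ropp, Rinv_inv; reflexivity).
  field; apply Rgt_not_eq, exp_pos.
Qed.

Lemma Xtilde_fixed_point_pMFG (T x0 q ps L : R) :
  den_pMFG T q ps <> 0 ->
  L = (1 - ps) * XMFC T x0 q + ps * Xtilde T x0 q L ->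
  L = (1 - ps) * XMFC T x0 q + ps * XpMFG T x0 q ps.
Proof.
  intros Hden HL.
  pose proof (den_pMFG_eq T q ps) as Hd.
  assert (Hu : 0 < exp (- T)) by apply exp_pos.
  set (a := q / 2 * (1 - exp (-2 * T))) in Hd.
  assert (Hda : 1 - ps * a <> 0).
  { rewrite <- Hd; apply Rmult_integral_contrapositive; split; [|exact Hden].
    apply Rgt_not_eq, Rdiv_lt_0_compat; lra. }
  assert (HL' : L * (1 - ps * a) = (1 - ps) * XMFC T x0 q + ps * exp (- T) * x0).
  { unfold Xtilde in HL; unfold a; lra. }
  unfold XpMFG.
  replace (den_pMFG T q ps) with ((1 - ps * a) * (2 / exp (- T)))
    by (rewrite <- Hd; field; lra).
  replace (exp T) with (/ exp (- T)) by (rewrite exp_Ropp, Rinv_inv; reflexivity).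
  replace L with (L * (1 - ps * a) / (1 - ps * a)) at 1 by (field; exact Hda).
  rewrite HL'; unfold a in *.
  replace (exp (-2 * T)) with (exp (- T) * exp (- T)) in * by (rewrite <- exp_plus; f_equal; ring).
  field; split; [lra | contradict Hda; lra].
Qed.

Lemma Xtilde_fixed_point_exists (T x0 q ps : R) :
  0 <= ps <= 1 -> Rabs (q / 2 * (1 - exp (-2 * T))) < 1 ->
  exists L, L = (1 - ps) * XMFC T x0 q + ps * Xtilde T x0 q L.
Proof.
  set (a := q / 2 * (1 - exp (-2 * T))); intros Hps Ha.
  assert (Hda : 0 < 1 - ps * a).
  { assert (Rabs (ps * a) < 1).
    { rewrite Rabs_mult, (Rabs_pos_eq ps) by lra; pose proof (Rabs_pos a); nra. }
    apply Rabs_lt_between in H; lra. }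
  exists (((1 - ps) * XMFC T x0 q + ps * exp (- T) * x0) / (1 - ps * a)).
  unfold Xtilde, a in *; field; lra.
Qed.

Theorem mainTheorem16 (T x0 q : R) (p : nat -> R) :
  0 < T ->
  (forall i, 0 <= p i <= 1) ->
  (den_pMFG T q (pstar p) <> 0 ->
     forall L, Un_cv (Xbar T x0 q p) L ->
     L = (1 - pstar p) * XMFC T x0 q + pstar p * XpMFG T x0 q (pstar p))
  /\
  (Rabs (q / 2 * (1 - exp (-2 * T))) < 1 ->
     exists L, Un_cv (Xbar T x0 q p) L).
Proof.
  intros _ Hp.
  pose proof (is_lim_seq_Qprod p Hp) as HQ.
  assert (Hw : 1 - (1 - pstar p) = pstar p) by ring.
  split.
  - intros Hden L HL; apply is_lim_seq_Reals in HL.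
    apply Xtilde_fixed_point_pMFG; [exact Hden|].
    rewrite <- Hw at 2.
    apply (relaxed_lim_fixed_point (Qprod p) _ _ _ (Xbar T x0 q p) HQ (fun n => eq_refl));
      [apply continuity_pt_Xtilde | exact HL].
  - intros Ha.
    destruct (Xtilde_fixed_point_exists T x0 q (pstar p) (pstar_01 p Hp) Ha) as [L HL].
    exists L; apply is_lim_seq_Reals.
    apply (relaxed_cv_fixed_point (Qprod p) (1 - pstar p) _ _ _ HQ (fun n => eq_refl)
             (Qprod_01 p Hp) (Rabs (q / 2 * (1 - exp (-2 * T))))).
    + split; [apply Rabs_pos | exact Ha].
    + intros y z; rewrite Xtilde_dist; lra.
    + rewrite Hw; exact HL.
Qed.
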